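(* Let $(g,f)$ be a Riordan matrix with $g(t)=\sum_{j\ge0}g_jt^j$, $g_0=1$, and $f(t)=\sum_{j\ge1}f_jt^j$, $f_1\neq0$. Then $(g,f)\in R_{1,1,1}$ if and only if $f_1=1$, $f_2=g_1$ and $g_2=g_1^2$; equivalently, $f_1=1$, $f_2=g_1$ and $g_2=f_2^2$.
   Context: Let $K$ be $\mathbb{R}$ or $\mathbb{C}$. A (proper) Riordan matrix is a pair $(g,f)$ of formal power series in $K[[t]]$ with $g(0)=1$, $f(0)=0$, $f'(0)\neq 0$. The $A$-sequence $(a_j)$ of $(g,f)$ is the unique sequence whose generating function $A(t)$ satisfies $f(t)=tA(f(t))$; the $Z$-sequence $(z_j)$ is the unique sequence whose generating function $Z(t)$ satisfies $g(t)=1/(1-tZ(f(t)))$. $R_{1,1,1}$ denotes the set of Riordan matrices with $a_0=1$, $z_0=a_1$ and $z_1=0$. *)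

(* Formal power series in K[[t]] are represented by their
   coefficient sequences nat -> K. *)
From mathcomp Require Import all_boot all_order all_algebra.
Set Implicit Arguments. Unset Strict Implicit. Unset Printing Implicit Defensive.
Import Order.TTheory GRing.Theory Num.Theory.
Local Open Scope ring_scope.

Definition fps (K : numFieldType) := nat -> K.

Definition fps_one (K : numFieldType) : fps K := fun n => if n is 0%N then 1 else 0.

Definition fps_mul (K : numFieldType) (p q : fps K) : fps K :=
  fun n => \sum_(i < n.+1) p i * q (n - i)%N.

Definition fps_tmul (K : numFieldType) (p : fps K) : fps K :=
  fun n => if n is m.+1 then p m else 0.

Definition fps_sub (K : numFieldType) (p q : fps K) : fps K := fun n => p n - q n.

Fixpoint fps_pow (K : numFieldType) (p : fps K) (k : nat) : fps K :=
  if k is k'.+1 then fps_mul p (fps_pow p k') else fps_one K.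

(* composition a(f(t)), meaningful when f(0) = 0 (the only case used) *)
Definition fps_comp (K : numFieldType) (a f : fps K) : fps K :=
  fun n => \sum_(k < n.+1) a k * fps_pow f k n.

Definition riordan (K : numFieldType) (g f : fps K) : Prop :=
  g 0%N = 1 /\ f 0%N = 0 /\ f 1%N != 0.

(* a is the A-sequence of (g,f):  f(t) = t A(f(t)) *)
Definition is_Aseq (K : numFieldType) (f a : fps K) : Prop :=
  f = fps_tmul (fps_comp a f).

(* z is the Z-sequence of (g,f):  g(t) = 1/(1 - t Z(f(t))),
   written without division as  g(t) (1 - t Z(f(t))) = 1 *)
Definition is_Zseq (K : numFieldType) (g f z : fps K) : Prop :=
  fps_mul g (fps_sub (fps_one K) (fps_tmul (fps_comp z f))) = fps_one K.

Definition R111 (K : numFieldType) (g f : fps K) : Prop :=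
  riordan g f /\
  exists a z : fps K, [/\ is_Aseq f a, is_Zseq g f z,
                          a 0%N = 1, z 0%N = a 1%N & z 1%N = 0].

(* Both the A-sequence equation  f(t) = t A(f(t))  and the Z-sequence
   equation  g(t) (1 - t Z(f(t))) = 1  are lower triangular linear systems
   for the unknown coefficients, with nonzero diagonal (powers of f_1, resp.
   g_0 = 1), so A and Z always exist.  Reading off the coefficients of t and
   t^2 gives  f_1 = a_0,  f_2 = a_1 f_1,  z_0 = g_1  and
   g_2 = g_1 z_0 + z_1 f_1,  from which the three conditions of R_{1,1,1}
   translate into  f_1 = 1,  f_2 = g_1,  g_2 = g_1^2. *)
From mathcomp Require Import all_boot all_order all_algebra.
From Stdlib Require Import FunctionalExtensionality.
From mathcomp Require Import zify ring.
Set Implicit Arguments. Unset Strict Implicit. Unset Printing Implicit Defensive.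
Import Order.TTheory GRing.Theory Num.Theory.
Local Open Scope ring_scope.

Section TriangularSystem.

Variables (K : numFieldType) (D : nat -> nat -> K) (c : nat -> K).
Hypothesis D_diag_neq0 : forall n, D n n != 0.

(* Stage n of forward substitution for  \sum_(k <= n) x_k D k n = c n. *)
Fixpoint forward_subst (n : nat) : nat -> K :=
  if n is n'.+1 then
    let x := forward_subst n' in
    fun k => if (k <= n')%N then x k
             else (c n - \sum_(j < n) x j * D j n) / D n n
  else fun _ => c 0%N / D 0%N 0%N.

Lemma forward_subst_stable n k :
  (k <= n)%N -> forward_subst n k = forward_subst k k.
Proof.
elim: n => [|n IHn] le_kn; first by move: le_kn; rewrite leqn0 => /eqP ->.
have [-> // | ne_k] := eqVneq k n.+1.
have le_k : (k <= n)%N by rewrite -ltnS ltn_neqAle ne_k le_kn.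
by rewrite /= le_k IHn.
Qed.

Lemma triangular_system_solvable :
  exists x : nat -> K, forall n, \sum_(k < n.+1) x k * D k n = c n.
Proof.
exists (fun k => forward_subst k k) => -[|n].
  by rewrite big_ord_recr big_ord0 /= add0r mulfVK.
rewrite big_ord_recr /= ltnn.
under eq_bigr => i _ do rewrite -(forward_subst_stable (ltnSE (ltn_ord i))).
by rewrite mulfVK // addrC subrK.
Qed.

End TriangularSystem.

Section PowerSeries.

Variable K : numFieldType.
Implicit Types (a f g h : fps K).

Lemma fps_mulC g h : fps_mul g h = fps_mul h g.
Proof.
apply: functional_extensionality => n; rewrite /fps_mul (reindex_inj rev_ord_inj).
apply: eq_bigr => i _; rewrite mulrC /= subSS subKn //.
by rewrite -ltnS.
Qed.

Lemma fps_inv_exists g : g 0%N != 0 -> exists h, fps_mul g h = fps_one K.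
Proof.
move=> g0; have gdiag n : g (n - n)%N != 0 by rewrite subnn.
have [h Hh] :=
  triangular_system_solvable (D := fun k n => g (n - k)%N) (fps_one K) gdiag.
exists h; rewrite fps_mulC; apply: functional_extensionality => n; exact: Hh.
Qed.

Section CompositionWithOrder1.

Variable f : fps K.
Hypothesis f0 : f 0%N = 0.

Lemma fps_pow_coef_lt k m : (m < k)%N -> fps_pow f k m = 0.
Proof.
elim: k m => [// | k IHk] m lt_mk /=.
rewrite /fps_mul big1 // => -[[|i] lt_im] _ /=; first by rewrite f0 mul0r.
by rewrite IHk ?mulr0 //; lia.
Qed.

Lemma fps_pow_coef_diag n : fps_pow f n n = f 1%N ^+ n.
Proof.
elim: n => [// | n IHn] /=.
rewrite /fps_mul big_ord_recl big_ord_recl /= f0 mul0r add0r subn1 /= IHn exprS.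
rewrite big1 ?addr0 // => -[i lt_in] _.
by rewrite fps_pow_coef_lt ?mulr0 //= /bump /=; lia.
Qed.

Lemma fps_comp_coef0 a : fps_comp a f 0%N = a 0%N.
Proof. by rewrite /fps_comp big_ord_recr big_ord0 /= add0r mulr1. Qed.

Lemma fps_comp_coef1 a : fps_comp a f 1%N = a 1%N * f 1%N.
Proof.
rewrite /fps_comp !big_ord_recr big_ord0 /= add0r -[fps_mul _ _ _]/(fps_pow f 1 1).
by rewrite fps_pow_coef_diag expr1 mulr0 add0r.
Qed.

Hypothesis f1 : f 1%N != 0.

Lemma fps_comp_surj c : exists a, fps_comp a f = c.
Proof.
have fdiag n : fps_pow f n n != 0 by rewrite fps_pow_coef_diag expf_neq0.
have [a Ha] := triangular_system_solvable (D := fps_pow f) c fdiag.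
by exists a; apply: functional_extensionality.
Qed.

Lemma Aseq_exists : exists a, is_Aseq f a.
Proof.
have [a Ha] := fps_comp_surj (fun n => f n.+1).
by exists a; apply: functional_extensionality => -[|n]; rewrite /fps_tmul ?Ha.
Qed.

Lemma Zseq_exists g : g 0%N = 1 -> exists z, is_Zseq g f z.
Proof.
move=> g0; have g0_neq0 : g 0%N != 0 by rewrite g0 oner_neq0.
have [h gh1] := fps_inv_exists g0_neq0.
have h0 : h 0%N = 1.
  have := congr1 (fun p => p 0%N) gh1.
  by rewrite /fps_mul big_ord_recr big_ord0 /= g0 add0r mul1r.
have [z Hz] := fps_comp_surj (fun n => - h n.+1).
exists z; rewrite /is_Zseq -[in RHS]gh1; congr fps_mul.
apply: functional_extensionality => -[|n]; rewrite /fps_sub /fps_tmul ?Hz.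
  by rewrite h0 subr0.
by rewrite sub0r opprK.
Qed.

Lemma Aseq_coef01 a : is_Aseq f a -> f 1%N = a 0%N /\ f 2%N = a 1%N * f 1%N.
Proof.
move=> fA; have coef n : f n.+1 = fps_comp a f n by rewrite {1}fA.
by split; rewrite coef ?fps_comp_coef0 ?fps_comp_coef1.
Qed.

Lemma Zseq_coef01 g z : g 0%N = 1 -> is_Zseq g f z ->
  z 0%N = g 1%N /\ g 2%N = g 1%N * z 0%N + z 1%N * f 1%N.
Proof.
move=> g0 gZ; have coef n := congr1 (fun p => p n) gZ.
have := coef 1%N; have := coef 2%N.
rewrite /fps_mul /fps_sub /fps_tmul /fps_one /= !big_ord_recr !big_ord0 /=.
rewrite !fps_comp_coef0 fps_comp_coef1 g0 => coef2 coef1.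
split; first by apply/eqP; rewrite -subr_eq0 -oppr_eq0 -coef1; apply/eqP; ring.
by apply/eqP; rewrite -subr_eq0 -coef2; apply/eqP; ring.
Qed.

End CompositionWithOrder1.

End PowerSeries.

Lemma R111E (K : numFieldType) (g f : fps K) : riordan g f ->
  R111 g f <-> [/\ f 1%N = 1, f 2%N = g 1%N & g 2%N = g 1%N ^+ 2].
Proof.
move=> rgf; have [g0 [f0 f1]] := rgf; split.
  move=> [_ [a [z [fA gZ a0 z0 z1]]]].
  have [fa0 fa1] := Aseq_coef01 f0 fA; have [zg1 gz1] := Zseq_coef01 f0 g0 gZ.
  have f1E : f 1%N = 1 by rewrite fa0.
  split=> //; first by rewrite fa1 f1E mulr1 -z0 zg1.
  by rewrite gz1 z1 mul0r addr0 zg1 expr2.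
move=> [f1E f2E g2E]; split=> //.
have [a fA] := Aseq_exists f0 f1; have [z gZ] := Zseq_exists f0 f1 g0.
have [fa0 fa1] := Aseq_coef01 f0 fA; have [zg1 gz1] := Zseq_coef01 f0 g0 gZ.
exists a, z; split=> //; first by rewrite -fa0.
  by rewrite zg1 -f2E fa1 f1E mulr1.
move: gz1; rewrite g2E f1E zg1 mulr1 expr2 -{1}[g 1%N * g 1%N]addr0.
by move=> /addrI.
Qed.

Theorem corollary4p5 (K : numFieldType) (g f : fps K) :
  riordan g f ->
  (R111 g f <-> [/\ f 1%N = 1, f 2%N = g 1%N & g 2%N = g 1%N ^+ 2]) /\
  (R111 g f <-> [/\ f 1%N = 1, f 2%N = g 1%N & g 2%N = f 2%N ^+ 2]).
Proof.
move=> rgf; split; rewrite (R111E rgf) //.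
by split=> -[f1E f2E g2E]; split; rewrite // g2E f2E.
Qed.
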